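(* The following are equivalent: (i) $S$ is strongly graded, i.e. $S_gS_h=S_{gh}$ for all $g,h\in G$; (ii) $S$ is symmetrically graded and, for every $g\in G$, every symmetrically graded left $S$-module $M$ with $M_g=0$ is the zero module.
   Context: $G$ is a group with identity $e$; $S=\bigoplus_{g\in G}S_g$ is an associative unital ring graded by $G$ ($S_gS_h\subseteq S_{gh}$), $R=S_e$, and $XY$ denotes the set of finite sums of products $xy$, $x\in X$, $y\in Y$. $S$ is symmetrically graded if $S_gS_{g^{-1}}S_g=S_g$ for every $g\in G$. A graded left $S$-module is $M=\bigoplus_g M_g$ with $S_gM_h\subseteq M_{gh}$; it is (left) symmetrically graded if $M_g=S_gS_{g^{-1}}M_g$ for every $g\in G$. *)

From HB Require Import structures.
From mathcomp Require Import all_boot all_algebra.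
From Stdlib Require List.
Set Implicit Arguments. Unset Strict Implicit. Unset Printing Implicit Defensive.
Import GRing.Theory.
Local Open Scope ring_scope.

(* An abstract (possibly infinite) group, given by its operations and axioms. *)
Record group := Group {
  gcar :> Type;
  gmul : gcar -> gcar -> gcar;
  gone : gcar;
  ginv : gcar -> gcar;
  gmulA : forall x y z, gmul x (gmul y z) = gmul (gmul x y) z;
  gmul1l : forall x, gmul gone x = x;
  gmul1r : forall x, gmul x gone = x;
  gmulVl : forall x, gmul (ginv x) x = gone;
  gmulVr : forall x, gmul x (ginv x) = gone }.

Definition sumprod (A B : Type) (C : nmodType) (op : A -> B -> C)
  (X : A -> Prop) (Y : B -> Prop) : C -> Prop :=
  fun c => exists s : seq (A * B),
    List.Forall (fun p => X p.1 /\ Y p.2) s /\ c = \sum_(p <- s) op p.1 p.2.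

Definition direct_sum_decomposition (G : group) (V : zmodType)
  (X : G -> V -> Prop) : Prop :=
  (forall g, X g 0 /\ (forall x y, X g x -> X g y -> X g (x - y))) /\
  (forall v : V, exists s : seq (G * V),
     List.Forall (fun p => X p.1 p.2) s /\ v = \sum_(p <- s) p.2) /\
  (forall s : seq (G * V), List.NoDup (map fst s) ->
     List.Forall (fun p => X p.1 p.2) s -> \sum_(p <- s) p.2 = 0 ->
     List.Forall (fun p => p.2 = 0) s).

Definition graded_ring (G : group) (S : pzRingType) (Sg : G -> S -> Prop) : Prop :=
  direct_sum_decomposition Sg /\
  (forall g h x, sumprod *%R (Sg g) (Sg h) x -> Sg (gmul g h) x).

Definition strongly_graded (G : group) (S : pzRingType) (Sg : G -> S -> Prop) : Prop :=
  forall g h x, sumprod *%R (Sg g) (Sg h) x <-> Sg (gmul g h) x.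

Definition symmetrically_graded (G : group) (S : pzRingType) (Sg : G -> S -> Prop) : Prop :=
  forall g x, sumprod *%R (sumprod *%R (Sg g) (Sg (ginv g))) (Sg g) x <-> Sg g x.

Definition graded_module (G : group) (S : pzRingType) (Sg : G -> S -> Prop)
  (M : lmodType S) (Mg : G -> M -> Prop) : Prop :=
  direct_sum_decomposition Mg /\
  (forall g h m, sumprod (fun (s : S) (v : M) => s *: v) (Sg g) (Mg h) m ->
     Mg (gmul g h) m).

Definition symmetrically_graded_module (G : group) (S : pzRingType)
  (Sg : G -> S -> Prop) (M : lmodType S) (Mg : G -> M -> Prop) : Prop :=
  forall g m, Mg g m <->
    sumprod (fun (s : S) (v : M) => s *: v)
      (sumprod *%R (Sg g) (Sg (ginv g))) (Mg g) m.

(* (i) => (ii): if S_g S_h = S_(gh), then S_g S_(g^-1) = S_e, so S_g S_(g^-1) S_g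
   = S_g.  If M is symmetric with M_g = 0, then for every k and m in M_k,
   m lies in S_k S_(k^-1) M_k = S_(k g^-1) S_(g k^-1) M_k, inside S_(k g^-1) M_g = 0.
   (ii) => (i): fix h.  The left ideal S S_h is homogeneous: the degree-d part of
   any of its elements lies in S_(d h^-1) S_h (lideal_comp).  Hence the quotient
   module M = S / S S_h is graded by the images of the S_k, it is symmetric since S
   is, and M_h = 0.  By (ii) M = 0, i.e. S = S S_h, and the degree-(gh) case of
   lideal_comp gives S_(gh) in S_g S_h. *)

From HB Require Import structures.
From mathcomp Require Import all_boot all_algebra.
From mathcomp Require Import boolp.
Set Implicit Arguments. Unset Strict Implicit. Unset Printing Implicit Defensive.
Import GRing.Theory.
Local Open Scope ring_scope.
Local Open Scope quotient_scope.

Lemma In_mem (U : eqType) (x : U) (s : seq U) : List.In x s <-> x \in s.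
Proof.
elim: s => [|y s IH] //=; rewrite in_cons.
split=> [[->|/IH->]|/orP[/eqP->|/IH]]; rewrite ?eqxx ?orbT; auto.
Qed.

Lemma ForallP (U : eqType) (P : U -> Prop) (s : seq U) :
  List.Forall P s <-> {in s, forall x, P x}.
Proof.
split=> [/List.Forall_forall H x /In_mem|H]; first exact: H.
by apply/List.Forall_forall => x /In_mem; apply: H.
Qed.

Lemma NoDupP (U : eqType) (s : seq U) : List.NoDup s <-> uniq s.
Proof.
elim: s => [|x s IH] /=; first by split=> // _; constructor.
rewrite List.NoDup_cons_iff.
split=> [[xs /IH ->]|/andP[xs /IH ?]]; last by split=> // /In_mem; apply/negP.
by rewrite andbT; apply/negP => /In_mem.
Qed.

Section SumProd.
Variables (A B : Type) (C : nmodType) (op : A -> B -> C).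
Implicit Types (X : A -> Prop) (Y : B -> Prop).

Lemma sumprod0 X Y : sumprod op X Y 0.
Proof. by exists [::]; rewrite big_nil. Qed.

Lemma sumprodD X Y z1 z2 :
  sumprod op X Y z1 -> sumprod op X Y z2 -> sumprod op X Y (z1 + z2).
Proof.
move=> [s [Hs ->]] [t [Ht ->]]; exists (s ++ t).
by rewrite big_cat; split=> //; apply/List.Forall_app.
Qed.

Lemma sumprod1 X Y x y : X x -> Y y -> sumprod op X Y (op x y).
Proof. by exists [:: (x, y)]; rewrite big_seq1; split=> //; constructor. Qed.

Lemma sumprod_min X Y (Z : C -> Prop) :
  Z 0 -> (forall z1 z2, Z z1 -> Z z2 -> Z (z1 + z2)) ->
  (forall x y, X x -> Y y -> Z (op x y)) -> forall z, sumprod op X Y z -> Z z.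
Proof.
move=> Z0 ZD Zop _ [s [Hs ->]].
elim: Hs => [|p t [Xp Yp] _ IH]; first by rewrite big_nil.
by rewrite big_cons; apply: ZD => //; apply: Zop.
Qed.

Lemma sumprod_mono X X' Y Y' :
  (forall x, X x -> X' x) -> (forall y, Y y -> Y' y) ->
  forall z, sumprod op X Y z -> sumprod op X' Y' z.
Proof.
move=> XX' YY'; apply: sumprod_min; [exact: sumprod0|exact: sumprodD|].
by move=> x y /XX' Xx /YY' Yy; apply: sumprod1.
Qed.

Lemma sumprod_big X Y (I : Type) (r : seq I) (P : pred I) (F : I -> C) :
  (forall i, P i -> sumprod op X Y (F i)) -> sumprod op X Y (\sum_(i <- r | P i) F i).
Proof. by apply: big_ind; [exact: sumprod0|exact: sumprodD]. Qed.
End SumProd.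

Section Components.
Variables (T : eqType) (V : zmodType) (X : T -> V -> Prop).
Hypothesis X0 : forall d, X d 0.
Hypothesis XB : forall d x y, X d x -> X d y -> X d (x - y).
Hypothesis X_indep : forall s : seq (T * V), uniq (map fst s) ->
  {in s, forall p, X p.1 p.2} -> \sum_(p <- s) p.2 = 0 -> {in s, forall p, p.2 = 0}.

Definition homogeneous (s : seq (T * V)) : Prop := {in s, forall p, X p.1 p.2}.

Definition comp (s : seq (T * V)) (d : T) : V := \sum_(p <- s | p.1 == d) p.2.

Lemma XD d x y : X d x -> X d y -> X d (x + y).
Proof.
by move=> Xx Xy; rewrite -[y]opprK -[- y]sub0r; apply: XB => //; apply: XB.
Qed.

Lemma comp_homog s d : homogeneous s -> X d (comp s d).
Proof.
move=> Hs; rewrite /comp big_seq_cond; apply: big_ind; [exact: X0|exact: XD|].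
by move=> p /andP[/Hs Xp /eqP pd] /=; rewrite -pd.
Qed.

Lemma comp_notin s d : d \notin map fst s -> comp s d = 0.
Proof.
by move=> dNs; apply: big1_seq => p /andP[/eqP pd ps]; move: dNs; rewrite -pd map_f.
Qed.

Lemma sum_comp s (D : seq T) : uniq D -> {in s, forall p, p.1 \in D} ->
  \sum_(p <- s) p.2 = \sum_(d <- D) comp s d.
Proof.
move=> uD sD; rewrite /comp (exchange_big_dep predT) //= big_seq [RHS]big_seq.
apply: eq_bigr => p /sD pD; rewrite (eq_bigl (pred1 p.1)) => [|d]; last by rewrite eq_sym.
by rewrite -big_filter filter_pred1_uniq // big_seq1.
Qed.

Lemma comp_unique s t : homogeneous s -> homogeneous t ->
  \sum_(p <- s) p.2 = \sum_(p <- t) p.2 -> forall d, comp s d = comp t d.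
Proof.
move=> Hs Ht Est d; pose D := undup (map fst (s ++ t)).
have sD u : u \in s -> u.1 \in D by move=> us; rewrite mem_undup map_f // mem_cat us.
have tD u : u \in t -> u.1 \in D by move=> ut; rewrite mem_undup map_f // mem_cat ut orbT.
pose diff := [seq (e, comp s e - comp t e) | e <- D].
have diff0 : {in diff, forall p, p.2 = 0}.
  apply: X_indep; first by rewrite -map_comp map_id undup_uniq.
    by move=> _ /mapP[e _ ->]; apply: XB; apply: comp_homog.
  by rewrite big_map sumrB -!sum_comp ?undup_uniq // Est subrr.
have [dD|dND] := boolP (d \in D).
  by apply/eqP; rewrite -subr_eq0; apply/eqP/(diff0 (d, _)); apply: map_f.
rewrite !comp_notin //; apply: contra dND => /mapP[u ? ->]; [exact: tD|exact: sD].
Qed.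

Lemma comp_key s p : uniq (map fst s) -> p \in s -> comp s p.1 = p.2.
Proof.
elim: s => [|q s IH] //= /andP[qNs us]; rewrite in_cons /comp big_cons -/(comp s _).
case/orP=> [/eqP ->|ps]; first by rewrite eqxx comp_notin // addr0.
have -> : (q.1 == p.1) = false by apply: contraNF qNs => /eqP ->; apply: map_f.
exact: IH.
Qed.
End Components.

Section GroupFacts.
Variable G : group.

Lemma gmulVK (g h : G) : gmul (gmul g (ginv h)) h = g.
Proof. by rewrite -gmulA gmulVl gmul1r. Qed.

Lemma gmulKV (g h : G) : gmul (gmul g h) (ginv h) = g.
Proof. by rewrite -gmulA gmulVr gmul1r. Qed.

Lemma gmul_transit (g k : G) : gmul (gmul k (ginv g)) (gmul g (ginv k)) = gone G.
Proof. by rewrite gmulA gmulVK gmulVr. Qed.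
End GroupFacts.

Definition lideal (R : pzRingType) (P : R -> Prop) : R -> Prop :=
  sumprod *%R (fun _ => True) P.

Section GradedRing.
Variables (G : group) (S : pzRingType) (Sg : G -> S -> Prop).
Hypothesis HS : graded_ring Sg.
(* Degrees range over G with classical decidable equality. *)
Local Notation T := {classic (gcar G)}.
Local Notation homog := (@homogeneous T S Sg).

Lemma Sg0 g : Sg g 0.
Proof. by case: HS => [[/(_ g)[]]]. Qed.

Lemma SgB g x y : Sg g x -> Sg g y -> Sg g (x - y).
Proof. by case: HS => [[/(_ g)[_ Bg] _] _]; apply: Bg. Qed.

Lemma Sg_sumprod g h x : sumprod *%R (Sg g) (Sg h) x -> Sg (gmul g h) x.
Proof. by case: HS => _; apply. Qed.

Lemma SgM g h a b : Sg g a -> Sg h b -> Sg (gmul g h) (a * b).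
Proof. by move=> Ha Hb; apply: Sg_sumprod; apply: sumprod1. Qed.

Lemma SgD g x y : Sg g x -> Sg g y -> Sg g (x + y).
Proof. exact: (@XD T S Sg Sg0 SgB). Qed.

Lemma Sg_decomp x : exists s : seq (T * S), homog s /\ x = \sum_(p <- s) p.2.
Proof.
case: HS => [[_ [/(_ x)[s [Hs ->]] _] _]].
by exists s; split=> //; apply/ForallP.
Qed.

Lemma Sg_indep (s : seq (T * S)) : uniq (map fst s) -> homog s ->
  \sum_(p <- s) p.2 = 0 -> {in s, forall p, p.2 = 0}.
Proof.
case: HS => [[_ [_ indep]] _] /NoDupP us /ForallP Hs s0.
exact/ForallP/(indep s).
Qed.

Lemma lideal_expand (P : S -> Prop) x : lideal P x ->
  exists Y : seq (T * (S * S)),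
    {in Y, forall y, Sg y.1 y.2.1 /\ P y.2.2} /\ x = \sum_(y <- Y) y.2.1 * y.2.2.
Proof.
elim/sumprod_min; first by exists [::]; rewrite big_nil.
  move=> _ _ [Y [HY ->]] [Y' [HY' ->]]; exists (Y ++ Y').
  by rewrite big_cat; split=> // y; rewrite mem_cat => /orP[/HY|/HY'].
move=> a b _ Pb; have [s [Hs ->]] := Sg_decomp a.
exists [seq (q.1, (q.2, b)) | q <- s]; rewrite big_map mulr_suml.
by split=> // _ /mapP[q /Hs ? ->].
Qed.

Lemma lideal_comp (h d : G) (s : seq (T * S)) : homog s ->
  lideal (Sg h) (\sum_(p <- s) p.2) ->
  sumprod *%R (Sg (gmul d (ginv h))) (Sg h) (comp s d).
Proof.
move=> Hs /lideal_expand[Y [HY EY]].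
pose W := [seq ((gmul y.1 h : T), y.2.1 * y.2.2) | y : T * (S * S) <- Y].
have HW : homog W by move=> _ /mapP[y /HY[? ?] ->]; apply: SgM.
have EW : \sum_(p <- s) p.2 = \sum_(p <- W) p.2 by rewrite big_map.
rewrite (@comp_unique T S Sg Sg0 SgB Sg_indep _ _ Hs HW EW) /comp big_map /=.
rewrite big_seq_cond; apply: sumprod_big => y /andP[/HY[Sy Shy] /eqP <-].
by rewrite gmulKV; apply: sumprod1.
Qed.

Lemma lideal_homog_elt (h d : G) x : Sg d x -> lideal (Sg h) x ->
  sumprod *%R (Sg (gmul d (ginv h))) (Sg h) x.
Proof.
move=> Sdx Ix; have := @lideal_comp h d [:: ((d : T), x)].
rewrite /comp !big_cons !big_nil /= eqxx !addr0; apply=> //.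
by move=> _ /[1!inE] /eqP ->.
Qed.

Lemma lideal_homog_family (h : G) (s : seq (T * S)) : uniq (map fst s) ->
  homog s -> lideal (Sg h) (\sum_(p <- s) p.2) -> {in s, forall p, lideal (Sg h) p.2}.
Proof.
move=> us Hs Is p ps; rewrite -(comp_key us ps).
exact: sumprod_mono (lideal_comp _ Hs Is).
Qed.
End GradedRing.

(* The quotient R / R P of a ring by the left ideal generated by P, as a left
   R-module, built on the additive quotient of ring_quotient. *)
Section LeftQuotient.
Variables (R : pzRingType) (P : R -> Prop).

Lemma lidealM a x : lideal P x -> lideal P (a * x).
Proof.
elim/sumprod_min; [by rewrite mulr0; apply: sumprod0| |].
  by move=> ? ? ? ?; rewrite mulrDr; apply: sumprodD.
by move=> b y _ Py; rewrite mulrA; apply: sumprod1.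
Qed.

Lemma lidealP x : P x -> lideal P x.
Proof. by move=> Px; rewrite -[x]mul1r; apply: sumprod1. Qed.

Definition lideal_pred : {pred R} := fun x => `[< lideal P x >].

Lemma lideal_zmod_closed : zmod_closed lideal_pred.
Proof.
split=> [|x y /asboolP Ix /asboolP Iy]; apply/asboolP; first exact: sumprod0.
by apply: sumprodD => //; rewrite -mulN1r; apply: lidealM.
Qed.

HB.instance Definition _ := GRing.isZmodClosed.Build R lideal_pred lideal_zmod_closed.

Local Notation quot := {ideal_quot lideal_pred}.

Lemma lquot_eq0 x : (\pi_quot x = 0) <-> lideal P x.
Proof.
have pi0 : \pi_quot 0 = 0 by rewrite raddf0.
rewrite -pi0; split=> [/eqquotP|Ix]; first by rewrite Quotient.equivE subr0 => /asboolP.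
by apply/(@eqquotP _ _ quot); rewrite Quotient.equivE subr0; apply/asboolP.
Qed.

(* Left multiplication descends to the quotient since R P is a left ideal. *)
Definition lquot_scale (r : R) (a : quot) : quot := \pi_quot (r * repr a).

Lemma pi_scale r : {morph \pi_quot : x / r * x >-> lquot_scale r x}.
Proof.
move=> x; apply/esym/eqquotP; rewrite Quotient.equivE -mulrBr.
have /asboolP : repr (\pi_quot x) - x \in lideal_pred.
  by rewrite Quotient.idealrBE reprK.
by move=> /(lidealM r) /asboolP.
Qed.
(* Lets piE push the projection through lquot_scale. *)
Canonical pi_scale_morph r := PiMorph1 (pi_scale r).

Lemma lquot_scaleA a b v : lquot_scale a (lquot_scale b v) = lquot_scale (a * b) v.
Proof. by rewrite -[v]reprK !piE mulrA. Qed.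

Lemma lquot_scale1 : left_id 1 lquot_scale.
Proof. by move=> v; rewrite -[v]reprK !piE mul1r. Qed.

Lemma lquot_scaleDr : right_distributive lquot_scale +%R.
Proof. by move=> a u v; rewrite -[u]reprK -[v]reprK !piE mulrDr. Qed.

Lemma lquot_scaleDl v : {morph lquot_scale^~ v : a b / a + b}.
Proof. by move=> a b; rewrite -[v]reprK !piE mulrDl. Qed.

HB.instance Definition _ := GRing.Zmodule_isLmodule.Build R quot
  lquot_scaleA lquot_scale1 lquot_scaleDr lquot_scaleDl.

Lemma lquot_piZ r x : \pi_quot (r * x) = r *: \pi_quot x.
Proof. exact: pi_scale. Qed.
End LeftQuotient.

Section QuotientGrading.
Variables (G : group) (S : pzRingType) (Sg : G -> S -> Prop).
Hypothesis HS : graded_ring Sg.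
Variable h : G.
Local Notation T := {classic (gcar G)}.
Local Notation M := {ideal_quot (lideal_pred (Sg h))}.
Local Notation pi := (\pi_M).
Local Notation homog := (@homogeneous T S Sg).

Definition quot_grading (k : G) (m : M) : Prop := exists2 s, Sg k s & m = pi s.
Local Notation Mg := quot_grading.

Lemma Mg0 k : Mg k 0.
Proof. by exists 0; [apply: Sg0|rewrite raddf0]. Qed.

Lemma MgB k m n : Mg k m -> Mg k n -> Mg k (m - n).
Proof. by move=> [s Ss ->] [t St ->]; exists (s - t); [apply: SgB|rewrite raddfB]. Qed.

Lemma MgD k m n : Mg k m -> Mg k n -> Mg k (m + n).
Proof. by move=> [s Ss ->] [t St ->]; exists (s + t); [apply: SgD|rewrite raddfD]. Qed.

Lemma quot_grading_lift (s : seq (G * M)) : List.Forall (fun p => Mg p.1 p.2) s ->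
  exists2 s' : seq (T * S), homog s' & s = [seq (p.1, pi p.2) | p <- s'].
Proof.
elim=> [|[k m] l [t St /= ->] _ [s' Hs' ->]]; first by exists [::].
by exists (((k : T), t) :: s') => // p /[1!inE] /orP[/eqP -> //|/Hs'].
Qed.

(* The M_k are independent, because S S_h is homogeneous. *)
Lemma quot_grading_indep (s : seq (G * M)) : List.NoDup (map fst s) ->
  List.Forall (fun p => Mg p.1 p.2) s -> \sum_(p <- s) p.2 = 0 ->
  List.Forall (fun p => p.2 = 0) s.
Proof.
move=> nd /quot_grading_lift[s' Hs' Es]; subst s.
have /NoDupP us : List.NoDup (map (@fst T S) s') by rewrite -map_comp in nd.
rewrite big_map -raddf_sum => /lquot_eq0 Is'.
apply/List.Forall_map/ForallP => p ps.
exact/lquot_eq0/(lideal_homog_family HS us Hs' Is').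
Qed.

Lemma quot_graded : graded_module Sg Mg.
Proof.
split; first (split; [|split]).
- by move=> k; split; [apply: Mg0|apply: MgB].
- move=> m; have [s [Hs Em]] := Sg_decomp HS (repr m).
  exists [seq (p.1, pi p.2) | p <- s]; split.
    by apply/List.Forall_map/ForallP => p /Hs Sp; exists p.2.
  by rewrite big_map -raddf_sum -Em; apply/esym/reprK.
- exact: quot_grading_indep.
- move=> g k m; elim/sumprod_min; [exact: Mg0|exact: MgD|].
  by move=> a _ Sa [t St ->]; exists (a * t); [apply: SgM|rewrite lquot_piZ].
Qed.

(* M_k = S_k S_(k^-1) M_k, lifted from S_k = S_k S_(k^-1) S_k. *)
Lemma quot_symmetric : symmetrically_graded Sg -> symmetrically_graded_module Sg Mg.
Proof.
move=> Ssym k m; split.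
- move=> [s /Ssym Ss ->]; move: Ss; elim/sumprod_min.
  + by rewrite raddf0; apply: sumprod0.
  + by move=> ? ? ? ?; rewrite raddfD; apply: sumprodD.
  + by move=> a b Sa Sb; rewrite lquot_piZ; apply: sumprod1 => //; exists b.
- elim/sumprod_min; [exact: Mg0|exact: MgD|].
  move=> a _ /(Sg_sumprod HS) Sa [t St ->].
  by exists (a * t); [rewrite -[k](gmulVK k k); apply: SgM|rewrite lquot_piZ].
Qed.

(* M vanishes in degree h since S_h lies in S S_h. *)
Lemma quot_grading_h (m : M) : Mg h m <-> m = 0.
Proof.
split=> [[s Ss ->]|->]; last exact: Mg0.
by apply/lquot_eq0/lidealP.
Qed.
End QuotientGrading.

Section StronglyGraded.
Variables (G : group) (S : pzRingType) (Sg : G -> S -> Prop).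
Hypothesis HST : strongly_graded Sg.

(* S_g S_(g^-1) S_g = S_e S_g = S_g. *)
Lemma strongly_symmetric : symmetrically_graded Sg.
Proof.
move=> g x; have Se y : sumprod *%R (Sg g) (Sg (ginv g)) y <-> Sg (gone G) y.
  by rewrite -(gmulVr g); apply: HST.
have := HST (gone G) g x; rewrite gmul1l => <-.
by split; apply: sumprod_mono => // y /Se.
Qed.

(* A symmetric module vanishing in one degree g vanishes in every degree k, since
   S_k S_(k^-1) = S_e = S_(k g^-1) S_(g k^-1) and S_(g k^-1) M_k lies in M_g. *)
Lemma strongly_module_vanish (g : G) (M : lmodType S) (Mg : G -> M -> Prop) :
  graded_module Sg Mg -> symmetrically_graded_module Sg Mg ->
  (forall m, Mg g m -> m = 0) -> forall m : M, m = 0.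
Proof.
move=> [[_ [Mdec _]] SMg] Msym Mg0.
have Mk0 k n : Mg k n -> n = 0.
  move=> /Msym; elim/sumprod_min => [//|z1 z2 -> ->|a b Sa Mb]; first by rewrite addr0.
  have : Sg (gone G) a by rewrite -(gmulVr k); apply/HST.
  rewrite -(gmul_transit g k) => /HST; elim/sumprod_min => [|z1 z2 z1b z2b|c d _ Sd].
  - by rewrite scale0r.
  - by rewrite scalerDl z1b z2b addr0.
  have Mdb : Mg g (d *: b) by rewrite -(gmulVK g k); apply: SMg; apply: sumprod1.
  by rewrite -scalerA (Mg0 _ Mdb) scaler0.
move=> m; have [s [Hs ->]] := Mdec m.
by elim: Hs => [|p l /Mk0 p0 _ IH]; rewrite ?big_nil // big_cons p0 IH addr0.
Qed.
End StronglyGraded.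

Theorem mainTheorem6 (G : group) (S : pzRingType) (Sg : G -> S -> Prop)
  (HS : graded_ring Sg) :
  strongly_graded Sg <->
  (symmetrically_graded Sg /\
   forall (g : G) (M : lmodType S) (Mg : G -> M -> Prop),
     graded_module Sg Mg -> symmetrically_graded_module Sg Mg ->
     (forall m : M, Mg g m <-> m = 0) ->
     forall m : M, m = 0).
Proof.
split=> [HST|[Ssym Mvanish] g h x].
  split; first exact: strongly_symmetric.
  move=> g M Mg HM HMs HMg.
  by apply: (strongly_module_vanish HST HM HMs) => m /HMg.
split; first exact: Sg_sumprod.
(* The module S / S S_h vanishes in degree h, hence everywhere: S = S S_h. *)
have Mzero := Mvanish h _ _ (quot_graded HS h) (quot_symmetric (h := h) HS Ssym)
  (quot_grading_h (h := h) HS).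
move=> Sx; have /lquot_eq0 Ix := Mzero (\pi_{ideal_quot lideal_pred (Sg h)} x).
by have := lideal_homog_elt HS Sx Ix; rewrite gmulKV.
Qed.
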